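(* Every even weakly $\varphi^*$-practical number is practical.
   Context: $\varphi^*$ is the multiplicative function with $\varphi^*(p^k)=p^k-1$ for primes $p$ and $k\ge1$ (unitary totient). For multiplicative $f$, $S_f(n)=\sum_{d\mid n}f(d)$. Write $n=p_1^{e_1}\cdots p_k^{e_k}$ with distinct primes ordered so that $f(p_1)\le\cdots\le f(p_k)$, and let $m_i=\prod_{j=1}^{i}p_j^{e_j}$ for $0\le i<k$ ($m_0=1$); $n$ is weakly $f$-practical if $f(p_{i+1})\le S_f(m_i)+1$ for every $0\le i<k$. A positive integer $n$ is practical if every integer $m$ with $1\le m\le n$ is a sum of distinct positive divisors of $n$. *)

From mathcomp Require Import all_boot.
Set Implicit Arguments. Unset Strict Implicit. Unset Printing Implicit Defensive.

(* Unitary totient: multiplicative, phistar (p^k) = p^k - 1. *)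
Definition phistar (n : nat) : nat :=
  \prod_(p <- primes n) (p ^ logn p n - 1).

Definition Sf (f : nat -> nat) (n : nat) : nat :=
  \sum_(d <- divisors n) f d.

(* The distinct prime divisors of n, ordered so that f(p_1) <= ... <= f(p_k)
   (stable sort; ties broken by increasing prime). *)
Definition fprimes (f : nat -> nat) (n : nat) : seq nat :=
  sort (fun p q => f p <= f q) (primes n).

Definition m_part (f : nat -> nat) (n i : nat) : nat :=
  \prod_(p <- take i (fprimes f n)) p ^ logn p n.

Definition weakly_f_practical (f : nat -> nat) (n : nat) : Prop :=
  forall i, i < size (fprimes f n) ->
    f (nth 0 (fprimes f n) i) <= Sf f (m_part f n i) + 1.

Definition practical (n : nat) : Prop :=
  0 < n /\ forall m, 1 <= m <= n ->
    exists s : seq nat, subseq s (divisors n) /\ sumn s = m.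

From mathcomp Require Import all_boot zify.

Set Implicit Arguments.
Unset Strict Implicit.
Unset Printing Implicit Defensive.

(* Since phistar p = p - 1 increases with p, ordering the primes of n by
   phistar orders them by size, and weak phistar-practicality says
   p_(i+1) <= S_phistar(m_i) + 2.  For i >= 1, m_i > 1 and
   S_phistar(m_i) < sigma(m_i), because phistar d <= d with equality only at
   d = 1; for i = 0, evenness forces p_1 = 2.  So p_(i+1) <= sigma(m_i) + 1 for
   every i, which is Stewart's criterion: if every k <= sigma(m) is a sum of
   distinct divisors of m, and the prime p does not divide m and satisfies
   p <= sigma(m) + 1, then the same holds for m p^(e+1), by writing k = p q + r
   with q <= sigma(m p^e) and r <= sigma(m). *)

Notation sigma := (Sf id).

Definition divisor_sums_complete (m : nat) : Prop :=
  forall k, k <= sigma m ->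
    exists s : seq nat, [/\ uniq s, all (fun d => d %| m) s & sumn s = k].

Lemma mulnI p : 0 < p -> injective (muln p).
Proof. by move=> p_gt0 x y /eqP; rewrite eqn_pmul2l // => /eqP. Qed.

Lemma leq_split_muln a b p k : 0 < p -> p <= a + 1 -> k <= a + p * b ->
  exists2 q, q <= b & p * q <= k <= p * q + a.
Proof.
move=> p_gt0 p_le k_le; exists (minn (k %/ p) b); first exact: geq_minr.
have := divn_eq k p; have := ltn_pmod k p_gt0.
case: leqP; nia.
Qed.

Lemma prodn_subn1_lt (I : eqType) (r : seq I) (F : I -> nat) :
  r != [::] -> (forall i, 0 < F i) ->
  \prod_(i <- r) (F i - 1) < \prod_(i <- r) F i.
Proof.
case: r => [//|x r] _ F_gt0; rewrite !big_cons.
have prod_le : \prod_(i <- r) (F i - 1) <= \prod_(i <- r) F i.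
  by apply: leq_prod => i _; exact: leq_subr.
have prod_gt0 : 0 < \prod_(i <- r) F i by exact: prodn_gt0.
have := F_gt0 x; nia.
Qed.

Lemma prod_primes_logn n : 0 < n -> \prod_(p <- primes n) p ^ logn p n = n.
Proof.
by move=> n_gt0; rewrite [RHS](prod_prime_decomp n_gt0) prime_decompE big_map.
Qed.

Lemma sigma1 : sigma 1 = 1.
Proof. by rewrite /Sf big_seq1. Qed.

Lemma divisors_mul_prime_pow m p e : prime p -> coprime p m -> 0 < m ->
  perm_eq (divisors (m * p ^ e.+1))
          (divisors m ++ map (muln p) (divisors (m * p ^ e))).
Proof.
move=> p_pr p_m m_gt0; have p_gt0 := prime_gt0 p_pr.
have ndvd_p d : d %| m -> ~~ (p %| d).
  by move=> dm; rewrite -prime_coprime // (coprime_dvdr dm p_m).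
have mp_gt0 k : 0 < m * p ^ k by rewrite muln_gt0 m_gt0 expn_gt0 p_gt0.
apply: uniq_perm; first exact: divisors_uniq.
  rewrite cat_uniq divisors_uniq map_inj_uniq ?divisors_uniq ?andbT;
    last exact: mulnI.
  apply/hasPn => _ /mapP [y _ ->]; rewrite -dvdn_divisors //.
  by apply/negP => /ndvd_p; rewrite dvdn_mulr.
move=> x; rewrite mem_cat -!dvdn_divisors //.
have [/dvdnP [y ->] | p_ndvd_x] := boolP (p %| x).
- rewrite [y * p]mulnC (mem_map (mulnI p_gt0)) -dvdn_divisors // expnS mulnCA.
  rewrite dvdn_pmul2l //; apply/esym/orb_idl => /ndvd_p.
  by rewrite dvdn_mulr.
- have -> : (x \in map (muln p) (divisors (m * p ^ e))) = false.
    by apply: contraNF p_ndvd_x => /mapP [y _ ->]; rewrite dvdn_mulr.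
  by rewrite orbF Gauss_dvdl // coprime_pexpr // coprime_sym prime_coprime.
Qed.

Lemma sigma_mul_prime_pow m p e : prime p -> coprime p m -> 0 < m ->
  sigma (m * p ^ e.+1) = sigma m + p * sigma (m * p ^ e).
Proof.
move=> p_pr p_m m_gt0.
rewrite /Sf (perm_big _ (divisors_mul_prime_pow e p_pr p_m m_gt0)).
by rewrite big_cat big_map big_distrr.
Qed.

Lemma divisor_sums_complete1 : divisor_sums_complete 1.
Proof.
move=> k; rewrite sigma1; case: k => [|[|//]] _; first by exists [::].
by exists [:: 1].
Qed.

Lemma divisor_sums_complete_mul_prime m p e :
  prime p -> coprime p m -> 0 < m -> p <= sigma m + 1 ->
  divisor_sums_complete m -> divisor_sums_complete (m * p ^ e) ->
  divisor_sums_complete (m * p ^ e.+1).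
Proof.
move=> p_pr p_m m_gt0 p_le m_compl mpe_compl k.
have p_gt0 := prime_gt0 p_pr.
rewrite sigma_mul_prime_pow // => k_le.
have [q q_le /andP [pq_le k_le_pq]] := leq_split_muln p_gt0 p_le k_le.
have [s1 [s1_uniq s1_dvd s1_sum]] := mpe_compl q q_le.
have r_le : k - p * q <= sigma m by lia.
have [s2 [s2_uniq s2_dvd s2_sum]] := m_compl _ r_le.
exists (map (muln p) s1 ++ s2); split.
- rewrite cat_uniq s2_uniq map_inj_uniq ?s1_uniq ?andbT //; last exact: mulnI.
  apply/hasPn => x /(allP s2_dvd) x_dvd_m; apply/mapP => -[y _ x_eq].
  have := coprime_dvdr x_dvd_m p_m.
  by rewrite prime_coprime // x_eq dvdn_mulr.
- rewrite all_cat all_map; apply/andP; split; apply/allP => d d_in /=.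
  + by rewrite expnS mulnCA dvdn_pmul2l // (allP s1_dvd).
  + by rewrite dvdn_mulr // (allP s2_dvd).
- by rewrite sumn_cat sumnE big_map -big_distrr -sumnE /= s1_sum s2_sum subnKC.
Qed.

Lemma divisor_sums_complete_mul_prime_pow m p e :
  prime p -> coprime p m -> 0 < m -> p <= sigma m + 1 ->
  divisor_sums_complete m -> divisor_sums_complete (m * p ^ e).
Proof.
move=> p_pr p_m m_gt0 p_le m_compl; elim: e => [|e IHe].
  by rewrite expn0 muln1.
exact: divisor_sums_complete_mul_prime.
Qed.

Lemma practical_of_divisor_sums_complete n :
  0 < n -> divisor_sums_complete n -> practical n.
Proof.
move=> n_gt0 n_compl; split=> // k /andP [_ k_le].
have sigma_ge : n <= sigma n.
  by rewrite /Sf (bigD1_seq n (divisors_id n_gt0) (divisors_uniq n)) leq_addr.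
have [s [s_uniq s_dvd <-]] := n_compl k (leq_trans k_le sigma_ge).
exists (filter (mem s) (divisors n)); split; first exact: filter_subseq.
apply/perm_sumn/uniq_perm => //; first exact/filter_uniq/divisors_uniq.
move=> x; rewrite mem_filter /= andb_idr // => x_in.
by rewrite -dvdn_divisors // (allP s_dvd).
Qed.

Definition prime_prefix (n i : nat) : nat :=
  \prod_(p <- take i (primes n)) p ^ logn p n.

Lemma prime_prefix0 n : prime_prefix n 0 = 1.
Proof. by rewrite /prime_prefix take0 big_nil. Qed.

Lemma prime_prefix_gt0 n i : 0 < prime_prefix n i.
Proof. exact: prodn_gt0. Qed.

Lemma prime_prefixS n i : i < size (primes n) ->
  prime_prefix n i.+1
  = prime_prefix n i * nth 0 (primes n) i ^ logn (nth 0 (primes n) i) n.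
Proof. by move=> i_lt; rewrite /prime_prefix (take_nth 0 i_lt) big_rcons. Qed.

Lemma prime_prefix_size n : 0 < n -> prime_prefix n (size (primes n)) = n.
Proof. by move=> n_gt0; rewrite /prime_prefix take_size prod_primes_logn. Qed.

Lemma prime_nth_primes n i : i < size (primes n) -> prime (nth 0 (primes n) i).
Proof. by move/(mem_nth 0); rewrite mem_primes => /and3P []. Qed.

Lemma coprime_prime_prefix n i : i < size (primes n) ->
  coprime (nth 0 (primes n) i) (prime_prefix n i).
Proof.
move=> i_lt; have p_pr := prime_nth_primes i_lt.
set p := nth 0 (primes n) i in p_pr *.
have p_notin : p \notin take i (primes n).
  by rewrite in_take ?mem_nth // index_uniq ?primes_uniq // ltnn.
rewrite prime_coprime // Euclid_dvd_prod // big_has; apply/hasPn => q q_in.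
have := mem_take q_in; rewrite mem_primes => /and3P [q_pr _ _].
rewrite Euclid_dvdX // dvdn_prime2 //.
by apply/negP => /andP [/eqP p_eq _]; move: p_notin; rewrite p_eq q_in.
Qed.

Lemma prime_prefix_gt1 n i : 0 < i <= size (primes n) -> 1 < prime_prefix n i.
Proof.
case: i => [//|i] /= i_lt; rewrite prime_prefixS //.
have p_pr := prime_nth_primes i_lt; set p := nth 0 (primes n) i in p_pr *.
have pe_gt1 : 1 < p ^ logn p n.
  by rewrite -{1}(expn0 p) ltn_exp2l ?prime_gt1 ?logn_gt0 ?mem_nth.
by rewrite (leq_trans pe_gt1) // leq_pmull ?prime_prefix_gt0.
Qed.

Lemma divisor_sums_complete_prime_prefix n i :
  (forall j, j < i -> nth 0 (primes n) j <= sigma (prime_prefix n j) + 1) ->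
  i <= size (primes n) -> divisor_sums_complete (prime_prefix n i).
Proof.
elim: i => [_ _ | i IHi crit i_lt].
  by rewrite prime_prefix0; exact: divisor_sums_complete1.
rewrite prime_prefixS //; apply: divisor_sums_complete_mul_prime_pow.
- exact: prime_nth_primes.
- exact: coprime_prime_prefix.
- exact: prime_prefix_gt0.
- exact: crit.
- by apply: IHi (ltnW i_lt) => j j_lt; apply: crit; rewrite ltnS ltnW.
Qed.

Lemma phistar_prime p : prime p -> phistar p = p - 1.
Proof.
by move=> p_pr; rewrite /phistar primes_prime // big_seq1 logn_prime // eqxx.
Qed.

Lemma phistar_lt d : 1 < d -> phistar d < d.
Proof.
move=> d_gt1; have d_gt0 : 0 < d by exact: ltnW.
rewrite /phistar -[X in _ < X](prod_primes_logn d_gt0).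
by apply: prodn_subn1_lt; rewrite ?primes_eq0 -?leqNgt.
Qed.

Lemma phistar_le d : 0 < d -> phistar d <= d.
Proof.
case: d => [//|[|d]] _; first by rewrite /phistar big_nil.
exact/ltnW/phistar_lt.
Qed.

Lemma Sf_phistar_lt_sigma m : 1 < m -> Sf phistar m < sigma m.
Proof.
move=> m_gt1; have m_gt0 : 0 < m by exact: ltnW.
rewrite /Sf !(bigD1_seq m (divisors_id m_gt0) (divisors_uniq m)) /= -addSn.
apply: leq_add; first exact: phistar_lt.
rewrite big_seq_cond [leqRHS]big_seq_cond; apply: leq_sum => d /andP [d_in _].
by apply/phistar_le/(dvdn_gt0 m_gt0); rewrite dvdn_divisors.
Qed.

Lemma fprimes_phistar n : fprimes phistar n = primes n.
Proof.
apply: sorted_sort; first by move=> y x z; exact: leq_trans.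
apply: (@sub_in_sorted _ prime ltn); last exact: sorted_primes.
- by move=> p q p_pr q_pr /= pq; rewrite !phistar_prime //; lia.
- by apply/allP => p; rewrite mem_primes => /and3P [].
Qed.

Theorem lemma5p1 (n : nat) :
  0 < n -> ~~ odd n -> weakly_f_practical phistar n -> practical n.
Proof.
move=> n_gt0 n_even.
rewrite /weakly_f_practical /m_part fprimes_phistar => weak.
apply: practical_of_divisor_sums_complete => //.
rewrite -(prime_prefix_size n_gt0).
apply: divisor_sums_complete_prime_prefix => // j j_lt.
have := weak j j_lt.
rewrite -/(prime_prefix n j) phistar_prime ?prime_nth_primes //.
have [-> _ | j_gt0] := posnP j.
- rewrite prime_prefix0 sigma1.
  have : pdiv n <= 2 by apply: pdiv_min_dvd; rewrite ?dvdn2.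
  by rewrite /pdiv; case: (primes n) j_lt.
- have m_gt1 : 1 < prime_prefix n j.
    by apply: prime_prefix_gt1; rewrite j_gt0 ltnW.
  have := Sf_phistar_lt_sigma m_gt1; lia.
Qed.
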